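(* Let $Smr(n)$ be the integer whose decimal expansion is the concatenation of $n+1,n,\ldots,2,1$ (so $Smr(0)=1$, $Smr(1)=21$, $Smr(2)=321$, $\ldots$). For every integer $n\geqslant 0$, put $$l=\lceil \log_{10}(n+2)\rceil,\qquad t_l=10^{l-1}-1,\qquad p_l=10^{l-1}\left(l-\frac{10}{9}\right)+l+\frac19,$$ $$\alpha_l=\frac{s_2-2\cdot 10^l s_1+10^{2l}s_0}{(10^l-1)^2},\qquad \mu_l=\frac{10^{p_l}\left(10^{2l-1}-10^{l-1}-1\right)}{(10^l-1)^2},\qquad \theta_l=\frac{10^{p_l}}{10^l-1},$$ where $s_0=Smr(t_l)$, $s_1=Smr(t_l+1)$, $s_2=Smr(t_l+2)$. Then $$Smr(n)=\alpha_l+\mu_l\,10^{l(n-t_l)}+\theta_l\,(n-t_l)\,10^{l(n-t_l)}.$$ *)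

From HB Require Import structures.
From mathcomp Require Import all_boot all_order all_algebra.
From mathcomp Require Import all_classical all_reals all_analysis.
Set Implicit Arguments. Unset Strict Implicit. Unset Printing Implicit Defensive.
Import Order.TTheory GRing.Theory Num.Theory.

Definition ndigits (k : nat) : nat := (trunc_log 10 k).+1.

Definition dconcat (a b : nat) : nat := a * 10 ^ ndigits b + b.

Fixpoint Smr (n : nat) : nat :=
  match n with
  | 0 => 1
  | m.+1 => dconcat m.+2 (Smr m)
  end.

Local Open Scope ring_scope.
Definition log10 {R : realType} (x : R) : R := ln x / ln 10.

From HB Require Import structures.
From mathcomp Require Import all_boot all_order all_algebra.
From mathcomp Require Import all_classical all_reals all_analysis.
From mathcomp Require Import ring zify.
Set Implicit Arguments. Unset Strict Implicit. Unset Printing Implicit Defensive.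
Import Order.TTheory GRing.Theory Num.Theory.

(* From t_l = 10^(l-1) - 1
   on, the prepended numbers 10^(l-1) + k + 1 all have l digits, so
   ndigits (Smr (t_l + k)) = p_l + l k, where p_l = ndigits (Smr t_l) is
   computed by induction on l.  Hence f k := Smr (t_l + k) satisfies
   f (k+1) = f k + (10^(l-1) + k + 1) 10^p_l (10^l)^k, an
   arithmetico-geometric recurrence whose solution is
   alpha_l + (mu_l + theta_l k) (10^l)^k, with alpha_l fixed by f 0, f 1, f 2. *)

Lemma ndigits_eq d k : 10 ^ d <= k < 10 ^ d.+1 -> ndigits k = d.+1.
Proof. by move=> h; rewrite /ndigits (trunc_log_eq _ h). Qed.

Lemma ndigits_dconcat a b : 0 < a -> ndigits (dconcat a b) = ndigits a + ndigits b.
Proof.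
move=> a_gt0; rewrite /dconcat /ndigits addSn; congr S.
have a_ge := trunc_logP (isT : 1 < 10) a_gt0.
have a_lt := trunc_log_ltn a (isT : 1 < 10).
have b_lt := trunc_log_ltn b (isT : 1 < 10).
apply: trunc_log_eq => //; apply/andP; split.
  by rewrite expnD; apply: leq_trans (leq_addr _ _); rewrite leq_mul.
rewrite -(addSn (trunc_log 10 a)) expnD.
apply: leq_trans (_ : a.+1 * 10 ^ (trunc_log 10 b).+1 <= _); last exact: leq_mul.
by rewrite mulSn addnC ltn_add2r.
Qed.

Lemma ndigits_SmrS d m : 10 ^ d <= m.+2 < 10 ^ d.+1 ->
  ndigits (Smr m.+1) = ndigits (Smr m) + d.+1.
Proof. by move=> hm; rewrite [Smr _]/= ndigits_dconcat // (ndigits_eq hm) addnC. Qed.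

Lemma ndigits_Smr_block d t k : 10 ^ d <= t.+1 -> t + k < (10 ^ d.+1).-1 ->
  ndigits (Smr (t + k)) = ndigits (Smr t) + d.+1 * k.
Proof.
move=> ht; elim: k => [|k IH] hk; first by rewrite addn0 muln0 addn0.
rewrite addnS (@ndigits_SmrS d) ?IH ?mulnS ?addnA //; lia.
Qed.

Lemma ndigits_Smr_pred_pow10 j :
  9 * ndigits (Smr (10 ^ j - 1)) + 10 ^ j.+1 = 10 ^ j * (9 * j.+1) + 9 * j.+1 + 1.
Proof.
elim: j => [//|j IH].
have pow_gt0 : 0 < 10 ^ j by rewrite expn_gt0.
have -> : 10 ^ j.+1 - 1 = (10 ^ j - 1 + (9 * 10 ^ j - 1)).+1 by rewrite expnS; lia.
rewrite (@ndigits_SmrS j.+1); last by rewrite !expnS; lia.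
rewrite (@ndigits_Smr_block j); [|lia|rewrite expnS; lia].
rewrite !expnS in IH *; nia.
Qed.

Lemma Smr_block_step j i : 10 ^ j - 1 + i < (10 ^ j.+1).-1 ->
  Smr (10 ^ j - 1 + i.+1) =
  Smr (10 ^ j - 1 + i) + (10 ^ j + i.+1) * 10 ^ (ndigits (Smr (10 ^ j - 1)) + j.+1 * i).
Proof.
move=> hi; have pow_gt0 : 0 < 10 ^ j by rewrite expn_gt0.
rewrite addnS [Smr _.+1]/= /dconcat addnC (@ndigits_Smr_block j) //; last by lia.
by congr (_ + _ * _); lia.
Qed.

Local Open Scope ring_scope.

Lemma arithgeom_recurrence_sol (R : fieldType) (x E c : R) (f : nat -> R) (K : nat) :
  x != 1 -> (2 <= K)%N ->
  (forall k, (k < K)%N -> f k.+1 = f k + (c + k.+1%:R) * E * x ^+ k) ->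
  forall k, (k <= K)%N ->
  f k = (f 2%N - 2 * x * f 1%N + x ^+ 2 * f 0%N) / (x - 1) ^+ 2
        + E * (c * x - c - 1) / (x - 1) ^+ 2 * x ^+ k
        + E / (x - 1) * k%:R * x ^+ k.
Proof.
move=> x_neq1 K_ge2 f_rec; have x1_neq0 : x - 1 != 0 by rewrite subr_eq0.
have f1 : f 1%N = f 0%N + (c + 1) * E by rewrite f_rec ?expr0 ?mulr1 //; lia.
have f2 : f 2%N = f 1%N + (c + 2) * E * x by rewrite f_rec ?expr1 //; lia.
rewrite f2 f1; elim=> [|k IH] hk.
  by rewrite !expr0 mulr0 mulr1; field.
by rewrite f_rec // IH ?(ltnW hk) // !exprS -!natr1; field.
Qed.

Lemma ceil_log10_nat (R : realType) (m j : nat) : (10 ^ j < m <= 10 ^ j.+1)%N ->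
  Num.ceil (log10 (m%:R : R)) = j.+1%:Z.
Proof.
move=> /andP[m_gt m_le].
have ln10_gt0 : 0 < ln (10 : R) by rewrite ln_gt0 // ltr1n.
have pos k : (0 < k)%N -> (k%:R : R) \in Num.pos by rewrite posrE ltr0n.
apply: ceil_def; rewrite -addn1 PoszD addrK /log10 ltr_pdivlMr // ler_pdivrMr //.
rewrite -!pmulrn !mulr_natl -!lnXn // -!natrX.
have m_gt0 : (0 < m)%N by apply: leq_ltn_trans m_gt.
by rewrite ltr_ln ?ler_ln ?pos ?expn_gt0 ?ltr_nat ?ler_nat ?addn1 ?m_gt.
Qed.

Lemma natr_ndigits_Smr_pred_pow10 (R : numFieldType) j :
  (ndigits (Smr (10 ^ j - 1)))%:R =
  (10 : R) ^+ j * (j.+1%:R - 10 / 9) + j.+1%:R + 1 / 9 :> R.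
Proof.
have nine_neq0 : (9 : R) != 0 by rewrite pnatr_eq0.
have := congr1 (fun k => k%:R : R) (ndigits_Smr_pred_pow10 j).
rewrite /= !natrD !natrM !natrX exprS => digits_eq.
rewrite -[LHS](@mulKf _ 9) // -[9 * _](addrK (10 * 10 ^+ j)) digits_eq.
by field.
Qed.

Section SmrBlock.
Variables (R : numFieldType) (j : nat).
Let t := (10 ^ j - 1)%N.
Let x : R := 10 ^+ j.+1.
Let E : R := 10 ^+ ndigits (Smr t).
Let c : R := 10 ^+ j.

Lemma Smr_block_closed_form k : (t + k < 10 ^ j.+1)%N ->
  (Smr (t + k))%:R =
  ((Smr t.+2)%:R - 2 * x * (Smr t.+1)%:R + x ^+ 2 * (Smr t)%:R) / (x - 1) ^+ 2
  + E * (c * x - c - 1) / (x - 1) ^+ 2 * x ^+ k + E / (x - 1) * k%:R * x ^+ k.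
Proof.
move=> hk; have pow_gt0 : (0 < 10 ^ j)%N by rewrite expn_gt0.
have x_neq1 : x != 1 by rewrite /x -natrX pnatr_eq1 -(expn0 10) eqn_exp2l.
have K_ge2 : (2 <= (10 ^ j.+1).-1 - t)%N by rewrite /t expnS; lia.
have f_rec i : (i < (10 ^ j.+1).-1 - t)%N ->
    (Smr (t + i.+1))%:R = (Smr (t + i))%:R + (c + i.+1%:R) * E * x ^+ i :> R.
  move=> hi; rewrite Smr_block_step; last by rewrite -/t; lia.
  by rewrite natrD natrM natrD !natrX exprD exprM mulrA.
have := arithgeom_recurrence_sol (f := fun i => (Smr (t + i))%:R) x_neq1 K_ge2 f_rec.
by rewrite !addn0 !addn1 !addn2 => -> //; lia.
Qed.

End SmrBlock.

Theorem corollary2 (R : realType) (n : nat) :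
  let l : int := Num.ceil (log10 ((n + 2)%:R : R)) in
  let t : nat := (10 ^ `|l - 1|%N - 1)%N in
  let p : R := (10 : R) ^ (l - 1) * (l%:~R - 10 / 9) + l%:~R + 1 / 9 in
  let s0 : R := (Smr t)%:R in
  let s1 : R := (Smr t.+1)%:R in
  let s2 : R := (Smr t.+2)%:R in
  let alpha : R := (s2 - 2 * (10 : R) ^ l * s1 + (10 : R) ^ (2 * l) * s0)
                   / ((10 : R) ^ l - 1) ^+ 2 in
  let mu : R := (10 : R) `^ p * ((10 : R) ^ (2 * l - 1) - (10 : R) ^ (l - 1) - 1)
                / ((10 : R) ^ l - 1) ^+ 2 in
  let theta : R := (10 : R) `^ p / ((10 : R) ^ l - 1) in
  (Smr n)%:R = alpha + mu * (10 : R) ^ (l * (n%:Z - t%:Z))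
               + theta * (n%:Z - t%:Z)%:~R * (10 : R) ^ (l * (n%:Z - t%:Z)).
Proof.
cbv zeta; set j := trunc_log 10 n.+1.
have n_ge : (10 ^ j <= n.+1)%N := trunc_logP (isT : (1 < 10)%N) (ltn0Sn n).
have n_lt : (n.+1 < 10 ^ j.+1)%N := trunc_log_ltn n.+1 (isT : (1 < 10)%N).
rewrite (@ceil_log10_nat R _ j); last by rewrite addn2 ltnS n_ge.
have -> : j.+1%:Z - 1 = j by rewrite -addn1 PoszD addrK.
have -> : 2 * j.+1%:Z - 1 = (j + j.+1)%N by rewrite -PoszM; lia.
rewrite absz_nat -!PoszM; set t := (10 ^ j - 1)%N.
have n_eq : n = (t + (n - t))%N by lia.
set k := (n - t)%N in n_eq *.
have -> : n%:Z - t%:Z = k by rewrite {1}n_eq PoszD addrC addKr.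
rewrite -![(10 : R) ^ Posz _]/((10 : R) ^+ _) -!pmulrn.
rewrite -natr_ndigits_Smr_pred_pow10 powR_mulrn ?ler0n // (mulnC 2) !exprM exprD.
by rewrite {1}n_eq; apply: Smr_block_closed_form; lia.
Qed.
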